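(* Let $\ell\ge 2$ and let $G$ be an $N$-AW graph of order $n$. Then: (1) no connected component of $\overline{G}$ is a path $P_k$ with $k\equiv 3\pmod 4$; (2) at most one connected component of $\overline{G}$ is a path $P_k$ with $k\equiv 1\pmod 4$; (3) if $G$ is $(n,\ell)$-extremal, then no connected component of $\overline{G}$ is a path with more than $4$ vertices.
   Context: All graphs are finite and simple; $\overline{G}$ is the complement; $P_k$ is the path on $k$ vertices. Labels lie in $\mathbb{Z}_\ell$. In the neighborhood Lights Out game, toggling a vertex $w$ adds $1$ (mod $\ell$) to the label of each vertex of the closed neighborhood $N[w]$; the game is won when all labels are $0$; a graph is $N$-AW if every initial labeling can be won. $\max(n,\ell)$ is the maximum number of edges of an $N$-AW graph on $n$ vertices, and an $(n,\ell)$-extremal graph is an $N$-AW graph on $n$ vertices with $\max(n,\ell)$ edges. *)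

From mathcomp Require Import all_boot all_order all_algebra.
Set Implicit Arguments. Unset Strict Implicit. Unset Printing Implicit Defensive.
Import GRing.Theory.

Definition simple_graph (n : nat) (e : rel 'I_n) : Prop :=
  symmetric e /\ irreflexive e.

Definition compl_rel (n : nat) (e : rel 'I_n) : rel 'I_n :=
  fun u v => (u != v) && ~~ e u v.

Definition num_edges (n : nat) (e : rel 'I_n) : nat :=
  #|[set p : 'I_n * 'I_n | (p.1 < p.2)%N && e p.1 p.2]|.

Definition toggle (n l : nat) (e : rel 'I_n) (lab : {ffun 'I_n -> 'Z_l}) (w : 'I_n)
  : {ffun 'I_n -> 'Z_l} :=
  [ffun v => (lab v + (if (v == w) || e w v then 1 else 0))%R].

Definition winnable (n l : nat) (e : rel 'I_n) (lab : {ffun 'I_n -> 'Z_l}) : Prop :=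
  exists s : seq 'I_n, foldl (toggle e) lab s = [ffun _ => 0%R].
Arguments winnable {n l} e lab.

Definition N_AW (n l : nat) (e : rel 'I_n) : Prop :=
  forall lab : {ffun 'I_n -> 'Z_l}, winnable e lab.
Arguments N_AW {n} l e.

Definition extremal (n l : nat) (e : rel 'I_n) : Prop :=
  simple_graph e /\ N_AW l e /\
  forall e' : rel 'I_n, simple_graph e' -> N_AW l e' -> (num_edges e' <= num_edges e)%N.
Arguments extremal {n} l e.

(* C is (the vertex set of) a connected component of the graph [g] which,
   as an induced subgraph, is isomorphic to the path P_k. *)
Definition path_component (n : nat) (g : rel 'I_n) (C : {set 'I_n}) (k : nat) : Prop :=
  (0 < k)%N /\
  (exists f : 'I_k -> 'I_n,
      injective f /\ [set f i | i : 'I_k] = C /\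
      forall i j : 'I_k, g (f i) (f j) = ((i.+1 == j) || (j.+1 == i))) /\
  (forall u v, u \in C -> g u v -> v \in C).

(* Toggling w adds the indicator of the closed neighbourhood N[w] to the labelling, so
   G is N-AW over Z_l iff the map x |-> N x, with N = J - A, J the all-ones matrix and A
   the adjacency matrix of the complement, is surjective, i.e. injective.  If a component
   of the complement is a path v_0 ... v_(k-1) with k odd, the vector x equal to
   1, 0, -1, 0, 1, ... along the path satisfies A x = 0, so N x is the constant vector
   sum(x), which is 0 when k = 3 mod 4 and 1 when k = 1 mod 4: in the first case x is a
   nonzero kernel vector, in the second two such paths give two preimages of the same
   vector.  When k >= 5, N[v_0] is the disjoint union of N[v_2] and {v_3}, which keeps N
   injective after adding the edge v_3 v_4 to G, contradicting extremality. *)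

From HB Require Import structures.
From mathcomp Require Import all_boot all_order all_algebra.
From mathcomp Require Import zify.
Set Implicit Arguments. Unset Strict Implicit. Unset Printing Implicit Defensive.
Import GRing.Theory.
Local Open Scope ring_scope.

Lemma surjF_inj (T : finType) (f : T -> T) :
  (forall y, exists x, f x = y) -> injective f.
Proof.
move=> f_surj; apply: in2T; apply/image_injP.
rewrite eqn_leq leq_image_card /=; apply/subset_leq_card/subsetP => y _.
by have [x <-] := f_surj y; apply: image_f.
Qed.

Section ClosedNeighbourhoodSum.
Variables (T : finType) (V : zmodType).
Implicit Types (e : rel T) (x : {ffun T -> V}).

Definition cnbhd e (w : T) : {set T} := [set v | (v == w) || e w v].

Definition nbhd_sum e x : {ffun T -> V} := [ffun v => \sum_(w | v \in cnbhd e w) x w].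

Definition single (w : T) (c : V) : {ffun T -> V} := [ffun u => if u == w then c else 0].

Lemma nbhd_sum_is_zmod_morphism e : zmod_morphism (nbhd_sum e).
Proof.
by move=> x y; apply/ffunP => v; rewrite !ffunE -sumrB; apply: eq_bigr => w _; rewrite !ffunE.
Qed.

HB.instance Definition _ e :=
  GRing.isZmodMorphism.Build _ _ (nbhd_sum e) (nbhd_sum_is_zmod_morphism e).

Lemma nbhd_sum_single e w c :
  nbhd_sum e (single w c) = [ffun v => if v \in cnbhd e w then c else 0].
Proof.
apply/ffunP => v; rewrite !ffunE (eq_bigr (fun u => if u == w then c else 0)); last first.
  by move=> u _; rewrite ffunE.
rewrite -big_mkcondr; case: ifP => vw.
  by rewrite (big_pred1 w) // => u /=; rewrite andbC; case: eqP => // ->.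
by apply: big_pred0 => u; rewrite andbC; case: eqP => // ->.
Qed.

Lemma nbhd_sum_sym e x v : symmetric e ->
  nbhd_sum e x v = \sum_(w in cnbhd e v) x w.
Proof. by move=> e_sym; rewrite ffunE; apply: eq_bigl => w; rewrite !inE eq_sym e_sym. Qed.

End ClosedNeighbourhoodSum.

Lemma cnbhd_compl n (e : rel 'I_n) w v : (v \in cnbhd e w) = ~~ compl_rel e w v.
Proof. by rewrite inE /compl_rel negb_and !negbK eq_sym. Qed.

Lemma nbhd_sum_compl n (V : zmodType) (e : rel 'I_n) (x : {ffun 'I_n -> V}) v :
  nbhd_sum e x v = \sum_w x w - \sum_(w | compl_rel e w v) x w.
Proof.
rewrite ffunE (bigID (fun w => compl_rel e w v) predT) /= addrAC subrr add0r.
by apply: eq_bigl => w; rewrite cnbhd_compl.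
Qed.

Section Toggling.
Variables (n l : nat) (e : rel 'I_n).

Definition count_label (s : seq 'I_n) : {ffun 'I_n -> 'Z_l} :=
  [ffun w => (count_mem w s)%:R].

Lemma count_label_surj x : exists s, count_label s = x.
Proof.
exists (flatten [seq nseq (x w : nat) w | w <- enum 'I_n]).
apply/ffunP => v; rewrite ffunE count_flatten -map_comp sumnE big_map big_enum /=.
rewrite (bigD1 v) //= big1 ?addn0 => [|u /negbTE uv]; last by rewrite count_nseq /= uv.
by rewrite count_nseq /= eqxx mul1n natr_Zp.
Qed.

Lemma toggleE (lab : {ffun 'I_n -> 'Z_l}) w :
  toggle e lab w = lab + nbhd_sum e (single w 1).
Proof. by apply/ffunP => v; rewrite nbhd_sum_single !ffunE inE. Qed.

Lemma foldl_toggle s (lab : {ffun 'I_n -> 'Z_l}) :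
  foldl (toggle e) lab s = lab + nbhd_sum e (count_label s).
Proof.
elim: s lab => [|w s IH] lab /=.
  have -> : count_label [::] = 0 by apply/ffunP => v; rewrite !ffunE.
  by rewrite raddf0 addr0.
have -> : count_label (w :: s) = single w 1 + count_label s.
  by apply/ffunP => u; rewrite !ffunE /= natrD eq_sym; case: (u == w).
by rewrite IH toggleE raddfD addrA.
Qed.

Lemma N_AW_inj : N_AW l e <-> injective (nbhd_sum e : {ffun 'I_n -> 'Z_l} -> _).
Proof.
split=> [AW | inj lab].
  apply: surjF_inj => b; have [s] := AW (- b).
  by rewrite foldl_toggle => /eqP; rewrite addrC subr_eq0 => /eqP <-; exists (count_label s).
have [x x_lab] := codomP (injF_onto inj (- lab)); have [s s_x] := count_label_surj x.
by exists s; rewrite foldl_toggle s_x -x_lab subrr.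
Qed.

End Toggling.

Section Alternating.
Variable R : pzRingType.

Definition alt (i : nat) : R := if odd i then 0 else (-1) ^+ i./2.

Lemma altSS i : alt i.+2 = - alt i.
Proof. by rewrite /alt /= negbK; case: (odd i); rewrite ?oppr0 // exprS mulN1r. Qed.

Lemma sum_alt k : odd k -> \sum_(i < k) alt i = (k %% 4 == 1)%N%:R.
Proof.
move=> k_odd; rewrite -(odd_double_half k) k_odd add1n.
elim: k./2 => [|m IH]; first by rewrite big_ord1.
rewrite doubleS 2!big_ord_recr /= IH altSS {1}/alt /= odd_double /= addr0.
rewrite /alt odd_double doubleK -signr_odd; move: (modn2 m).
case: (odd m) => /= m2.
  have -> : (m.*2.+1 %% 4 = 3)%N by lia.
  have -> : (m.*2.+3 %% 4 = 1)%N by lia.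
  by rewrite sub0r opprK.
have -> : (m.*2.+1 %% 4 = 1)%N by lia.
have -> : (m.*2.+3 %% 4 = 3)%N by lia.
by rewrite subrr.
Qed.

Lemma sum_alt_adj k j : odd k -> (j < k)%N ->
  \sum_(i < k | (i.+1 == j) || (j.+1 == i)) alt i = 0.
Proof.
move=> k_odd j_lt_k; case j_odd: (odd j); last first.
  rewrite big1 // => i /orP[]/eqP ij; rewrite /alt.
    by move: j_odd; rewrite -ij /= => /negbFE ->.
  by rewrite -ij /= j_odd.
case: j j_odd j_lt_k => [|j] // j_odd j_lt_k.
have j_lt : (j < k)%N by lia.
have j2_lt : (j.+2 < k)%N.
  by rewrite ltn_neqAle j_lt_k andbT; apply: contraTneq k_odd => <- /=; rewrite negbK.
rewrite (bigD1 (Ordinal j_lt)) ?eqxx //= (bigD1 (Ordinal j2_lt)) /=; last first.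
  by rewrite -val_eqE /= eqxx orbT; lia.
rewrite big_pred0 => [|i]; first by rewrite altSS addr0 subrr.
by rewrite -!val_eqE /=; lia.
Qed.

End Alternating.

Section Pushforward.
Variables (I T : finType) (V : zmodType) (f : I -> T) (a : I -> V).

Definition pushforward : {ffun T -> V} := [ffun v => \sum_(i | f i == v) a i].

Lemma sum_pushforward (P : pred T) :
  \sum_(v | P v) pushforward v = \sum_(i | P (f i)) a i.
Proof.
rewrite (partition_big f P) //; apply: eq_bigr => v Pv; rewrite ffunE.
by apply: eq_bigl => i; rewrite andb_idl // => /eqP ->.
Qed.

Lemma pushforward_inj i : injective f -> pushforward (f i) = a i.
Proof. by move=> f_inj; rewrite ffunE (big_pred1 i) // => j; rewrite /= (inj_eq f_inj). Qed.

Lemma pushforward_out v : (forall i, f i != v) -> pushforward v = 0.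
Proof. by move=> f_v; rewrite ffunE big_pred0 // => i; apply/negbTE. Qed.

End Pushforward.

Section PathComponent.
Variables (n k : nat) (g : rel 'I_n) (C : {set 'I_n}) (f : 'I_k -> 'I_n).
Hypothesis f_adj : forall i j : 'I_k, g (f i) (f j) = (i.+1 == j) || (j.+1 == i).

Lemma path_closed_mem (D : {pred 'I_n}) :
  (forall u v, u \in D -> g u v -> v \in D) -> forall i j, f i \in D -> f j \in D.
Proof.
move=> D_closed i j.
have k_gt0 : (0 < k)%N by apply: leq_ltn_trans (ltn_ord i).
have memS (i1 i2 : 'I_k) : i1.+1 = i2 -> (f i1 \in D) = (f i2 \in D).
  move=> i12; apply/idP/idP => [|] /D_closed; apply; by rewrite f_adj i12 eqxx ?orbT.
have mem0 m (i' : 'I_k) : i' = m :> nat -> (f i' \in D) = (f (Ordinal k_gt0) \in D).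
  elim: m i' => [|m IH] i' i'm; first by congr (f _ \in D); apply: val_inj.
  have m_lt : (m < k)%N by rewrite -i'm ltnW.
  by rewrite -(memS (Ordinal m_lt) i') ?IH.
by rewrite (mem0 j j) // -(mem0 i i).
Qed.

Hypotheses (C_closed : forall u v, u \in C -> g u v -> v \in C)
  (f_im : [set f i | i : 'I_k] = C).

Lemma path_nbhd_out i v : v \notin C -> g (f i) v = false.
Proof. by move=> vC; apply: contraNF vC; apply: C_closed; rewrite -f_im imset_f. Qed.

Lemma sum_alt_path_nbhd (R : pzRingType) v : odd k -> \sum_(i | g (f i) v) alt R i = 0.
Proof.
move=> k_odd; case: (boolP (v \in C)) => [|vC]; last first.
  by rewrite big_pred0 // => i; rewrite path_nbhd_out.
rewrite -f_im => /imsetP [j _ ->].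
by rewrite (eq_bigl _ _ (fun i => f_adj i j)) sum_alt_adj.
Qed.

End PathComponent.

Lemma path_component_eq n (g : rel 'I_n) C1 C2 k1 k2 v :
  path_component g C1 k1 -> path_component g C2 k2 -> v \in C1 -> v \in C2 -> C1 = C2.
Proof.
suff sub D1 D2 m1 m2 : path_component g D1 m1 -> path_component g D2 m2 ->
    v \in D1 -> v \in D2 -> D1 \subset D2.
  move=> C1k1 C2k2 vC1 vC2; apply/eqP.
  by rewrite eqEsubset (sub _ _ _ _ C1k1 C2k2) ?(sub _ _ _ _ C2k2 C1k1).
move=> [_ [[f [_ [f_im f_adj]]] _]] [_ [_ D2_closed]] vD1 vD2.
move: vD1; rewrite -f_im => /imsetP [i _ vi]; apply/subsetP => _ /imsetP [j _ ->].
by apply: (path_closed_mem f_adj D2_closed (i := i)); rewrite -vi.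
Qed.

Lemma nbhd_sum_alt_path n (R : pzRingType) (e : rel 'I_n) (C : {set 'I_n}) k
    (f : 'I_k -> 'I_n) :
  (forall i j, compl_rel e (f i) (f j) = (i.+1 == j) || (j.+1 == i)) ->
  (forall u v, u \in C -> compl_rel e u v -> v \in C) ->
  [set f i | i : 'I_k] = C -> odd k ->
  nbhd_sum e (pushforward f (alt R)) = [ffun=> (k %% 4 == 1)%N%:R].
Proof.
move=> f_adj C_closed f_im k_odd; apply/ffunP => v.
rewrite nbhd_sum_compl !sum_pushforward (sum_alt_path_nbhd f_adj C_closed f_im) //.
by rewrite subr0 ffunE sum_alt.
Qed.

Lemma path_compl_mod4_neq3 n l (e : rel 'I_n) C k :
  N_AW l e -> path_component (compl_rel e) C k -> (k %% 4 <> 3)%N.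
Proof.
move=> /N_AW_inj inj [k_gt0 [[f [f_inj [f_im f_adj]]] C_closed]] k_mod4.
have k_odd : odd k by rewrite -(@odd_mod k 4) // k_mod4.
have alt_vec_eq0 : pushforward f (alt 'Z_l) = 0.
  apply: inj; rewrite raddf0 (nbhd_sum_alt_path _ f_adj C_closed f_im k_odd) k_mod4.
  by apply/ffunP => v; rewrite !ffunE.
have := congr1 (fun x : {ffun 'I_n -> 'Z_l} => x (f (Ordinal k_gt0))) alt_vec_eq0.
by rewrite /= pushforward_inj // ffunE => /eqP; rewrite oner_eq0.
Qed.

Lemma path_compl_mod4_eq1_unique n l (e : rel 'I_n) C1 C2 k1 k2 :
  N_AW l e -> path_component (compl_rel e) C1 k1 -> path_component (compl_rel e) C2 k2 ->
  (k1 %% 4 = 1)%N -> (k2 %% 4 = 1)%N -> C1 = C2.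
Proof.
move=> /N_AW_inj inj C1k1 C2k2 k1_mod4 k2_mod4.
move: (C1k1) (C2k2) => [k1_gt0 [[f1 [f1_inj [f1_im f1_adj]]] C1_closed]].
move=> [_ [[f2 [_ [f2_im f2_adj]]] C2_closed]].
have k1_odd : odd k1 by rewrite -(@odd_mod k1 4) // k1_mod4.
have k2_odd : odd k2 by rewrite -(@odd_mod k2 4) // k2_mod4.
have alt_vec_eq : pushforward f1 (alt 'Z_l) = pushforward f2 (alt 'Z_l).
  by apply: inj; rewrite (nbhd_sum_alt_path _ f1_adj C1_closed f1_im k1_odd)
    (nbhd_sum_alt_path _ f2_adj C2_closed f2_im k2_odd) k1_mod4 k2_mod4.
pose v := f1 (Ordinal k1_gt0).
apply: (path_component_eq C1k1 C2k2 (v := v)); first by rewrite -f1_im imset_f.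
rewrite -f2_im; apply: contraT => vC2.
have := congr1 (fun x : {ffun 'I_n -> 'Z_l} => x v) alt_vec_eq.
rewrite /= pushforward_inj // pushforward_out.
  by move=> /eqP; rewrite oner_eq0.
by move=> i; apply: contraNneq vC2 => <-; rewrite imset_f.
Qed.

Definition add_edge (T : eqType) (e : rel T) (a b : T) : rel T :=
  fun u v => e u v || (u == a) && (v == b) || (u == b) && (v == a).

Lemma add_edge_simple n (e : rel 'I_n) a b :
  simple_graph e -> a != b -> simple_graph (add_edge e a b).
Proof.
move=> [e_sym e_irr] ab; split=> [u v | u].
  by rewrite /add_edge e_sym; case: (u == a) (u == b) (v == a) (v == b) => [] [] [] [];
    rewrite /= ?orbT ?orbF.
rewrite /add_edge e_irr /=; apply/negP => /orP[] /andP[/eqP ua /eqP ub];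
  by move: ab; rewrite -ua -ub eqxx.
Qed.

Lemma num_edges_add_edge n (e : rel 'I_n) a b :
  symmetric e -> a != b -> ~~ e a b -> (num_edges e < num_edges (add_edge e a b))%N.
Proof.
move=> e_sym ab e_ab; apply/proper_card/properP; split.
  by apply/subsetP => p; rewrite !inE /add_edge => /andP [-> ->].
have [ab_lt | ba_lt] : (a < b)%N \/ (b < a)%N.
  by apply/orP; rewrite -neq_ltn val_eqE.
  by exists (a, b); rewrite !inE /add_edge /= ab_lt ?eqxx ?orbT // (negbTE e_ab).
by exists (b, a); rewrite !inE /add_edge /= ba_lt ?eqxx ?orbT // e_sym (negbTE e_ab).
Qed.

Lemma nbhd_sum_add_edge (T : finType) (V : zmodType) (e : rel T) a b (x : {ffun T -> V}) v :
  a != b -> ~~ e a b -> ~~ e b a ->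
  nbhd_sum (add_edge e a b) x v =
    nbhd_sum e x v + ((if v == a then x b else 0) + (if v == b then x a else 0)).
Proof.
move=> ab e_ab e_ba; rewrite !ffunE (bigID (fun w => v \in cnbhd e w)) /=.
congr (_ + _).
  by apply: eq_bigl => w; rewrite andb_idl // !inE /add_edge => /orP[-> | ->]; rewrite ?orbT.
rewrite (eq_bigl (fun w => (w == a) && (v == b) || (w == b) && (v == a))) => [|w]; last first.
  rewrite !inE /add_edge.
  case: (boolP ((w == a) && (v == b))) => [/andP[/eqP -> /eqP ->] | _].
    by rewrite [b == a]eq_sym (negbTE ab) (negbTE e_ab) !orbT.
  case: (boolP ((w == b) && (v == a))) => [/andP[/eqP -> /eqP ->] | _].
    by rewrite (negbTE ab) (negbTE e_ba) !orbT.
  by rewrite !orbF andbN.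
have [-> | _] := eqVneq v a.
  by rewrite (negbTE ab) addr0 (big_pred1 b) // => w /=; rewrite andbF andbT.
have [_ | _] := eqVneq v b.
  by rewrite add0r (big_pred1 a) // => w /=; rewrite andbF orbF andbT.
by rewrite addr0 big_pred0 // => w; rewrite !andbF.
Qed.

(* For y in the kernel of the new map, rows p and q are unchanged and differ by the
   indicator of a, which forces y a = 0; the remaining defect y b e_a is then the image
   of y b (e_p - e_q) under the old map. *)
Lemma N_AW_add_edge n l (e : rel 'I_n) a b p q :
  symmetric e -> N_AW l e -> a != b -> ~~ e a b ->
  p \notin [set a; b] -> q \notin [set a; b] ->
  cnbhd e p = a |: cnbhd e q -> a \notin cnbhd e q ->
  N_AW l (add_edge e a b).
Proof.
move=> e_sym /N_AW_inj inj ab e_ab p_ab q_ab Np a_Nq.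
have e_ba : ~~ e b a by rewrite e_sym.
move: p_ab q_ab; rewrite !inE !negb_or => /andP[pa pb] /andP[qa qb].
apply/N_AW_inj/raddf_inj => y y0.
have yE v : nbhd_sum e y v = - ((if v == a then y b else 0) + (if v == b then y a else 0)).
  have := nbhd_sum_add_edge y v ab e_ab e_ba.
  by rewrite y0 ffunE => /esym/eqP; rewrite addr_eq0 => /eqP.
have ya : y a = 0.
  have := yE p; have := yE q; rewrite !nbhd_sum_sym // Np big_setU1 //=.
  by rewrite (negbTE pa) (negbTE pb) (negbTE qa) (negbTE qb) !addr0 oppr0 => ->; rewrite addr0.
have {}yE : nbhd_sum e y = - single a (y b).
  by apply/ffunP => v; rewrite yE ya !ffunE if_same addr0.
have z0 : y + single p (y b) - single q (y b) = 0.
  apply: inj; rewrite raddf0 raddfB raddfD /= yE !nbhd_sum_single; apply/ffunP => v.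
  rewrite !ffunE Np in_setU1.
  by case: eqP => [-> | _] /=; rewrite ?(negbTE a_Nq) ?subr0 ?addNr // oppr0 add0r subrr.
have yb : y b = 0.
  have := congr1 (fun z : {ffun 'I_n -> 'Z_l} => z b) z0.
  by rewrite !ffunE eq_sym (negbTE pb) eq_sym (negbTE qb) addr0 subr0.
apply/ffunP => w; have := congr1 (fun z : {ffun 'I_n -> 'Z_l} => z w) z0.
by rewrite !ffunE yb !if_same addr0 subr0.
Qed.

Lemma extremal_path_compl_le4 n l (e : rel 'I_n) C k :
  simple_graph e -> extremal l e -> path_component (compl_rel e) C k -> (k <= 4)%N.
Proof.
move=> [e_sym e_irr] [_ [AW e_max]] [_ [[f [f_inj [f_im f_adj]]] C_closed]].
rewrite leqNgt; apply/negP => k_gt4.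
move: f f_inj f_im f_adj C_closed; case: k k_gt4 => // k k_gt4 f f_inj f_im f_adj C_closed.
have adj_inord i j : (i <= k)%N -> (j <= k)%N ->
    compl_rel e (f (inord i)) (f (inord j)) = (i.+1 == j) || (j.+1 == i).
  by move=> ik jk; rewrite f_adj !inordK.
have eq_inord i j : (i <= k)%N -> (j <= k)%N -> (f (inord i) == f (inord j)) = (i == j).
  by move=> ik jk; rewrite (inj_eq f_inj) -val_eqE /= !inordK.
have /andP[_ e_34] : compl_rel e (f (inord 3)) (f (inord 4)) by rewrite adj_inord //; lia.
have ab : f (inord 3) != f (inord 4) by rewrite eq_inord //; lia.
have p_ab : f (inord 0) \notin [set f (inord 3); f (inord 4)].
  by rewrite !inE !eq_inord //; lia.
have q_ab : f (inord 2) \notin [set f (inord 3); f (inord 4)].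
  by rewrite !inE !eq_inord //; lia.
have a_Nq : f (inord 3) \notin cnbhd e (f (inord 2)).
  by rewrite cnbhd_compl negbK adj_inord //; lia.
have Np : cnbhd e (f (inord 0)) = f (inord 3) |: cnbhd e (f (inord 2)).
  apply/setP => v; rewrite in_setU1 !cnbhd_compl.
  have [vC | vC] := boolP (v \in C); last by rewrite !(path_nbhd_out C_closed f_im) // orbT.
  move: vC; rewrite -f_im => /imsetP [j _ ->]; rewrite -[j]inord_val.
  have j_le : (j <= k)%N by rewrite -ltnS.
  by rewrite !adj_inord ?eq_inord //; lia.
have := e_max _ (add_edge_simple (conj e_sym e_irr) ab)
  (N_AW_add_edge e_sym AW ab e_34 p_ab q_ab Np a_Nq).
by rewrite leqNgt num_edges_add_edge.
Qed.

Local Close Scope ring_scope.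

Theorem corollary3p2 (l n : nat) (e : rel 'I_n) :
  (2 <= l)%N -> simple_graph e -> N_AW l e ->
  [/\ (forall C k, path_component (compl_rel e) C k -> k %% 4 <> 3),
      (forall C1 C2 k1 k2,
          path_component (compl_rel e) C1 k1 -> path_component (compl_rel e) C2 k2 ->
          k1 %% 4 = 1 -> k2 %% 4 = 1 -> C1 = C2)
    & (extremal l e -> forall C k, path_component (compl_rel e) C k -> (k <= 4)%N)].
Proof.
move=> _ e_simple AW; split.
- by move=> C k; apply: path_compl_mod4_neq3 AW.
- by move=> C1 C2 k1 k2; apply: path_compl_mod4_eq1_unique AW.
- by move=> e_ext C k; apply: extremal_path_compl_le4 e_simple e_ext.
Qed.
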